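(* Let $q\ge 2$ be a prime power and let $n\ge 6$ be divisible by $3$. Then every $3$-spread of $\mathbb{F}_q^n$ is a completely regular code in the Grassmann graph $J_q(n,3)$ with covering radius $2$.
   Context: The Grassmann graph $J_q(n,k)$ has as vertices the $k$-dimensional subspaces of $\mathbb{F}_q^n$, adjacent iff they meet in a $(k-1)$-dimensional subspace. A $3$-spread is a set of $3$-dimensional subspaces of $\mathbb{F}_q^n$ such that every nonzero vector lies in exactly one of them. For a nonempty vertex set $C$ of a connected regular graph, $C_i$ denotes the set of vertices at distance exactly $i$ from $C$, the covering radius $\rho$ is the largest $i$ with $C_i\ne\emptyset$, and $C$ is completely regular if there are numbers $\gamma_i,\alpha_i,\beta_i$ such that every vertex of $C_i$ has exactly $\gamma_i$ neighbours in $C_{i-1}$, $\alpha_i$ in $C_i$ and $\beta_i$ in $C_{i+1}$, for all $i$. *)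

From HB Require Import structures.
From mathcomp Require Import all_boot all_order all_algebra all_field.
Set Implicit Arguments. Unset Strict Implicit. Unset Printing Implicit Defensive.
Import GRing.Theory.
Local Open Scope ring_scope.

Fixpoint reach (V : Type) (adj : V -> V -> Prop) (k : nat) (x y : V) : Prop :=
  match k with
  | 0 => x = y
  | k'.+1 => reach adj k' x y \/ exists z, reach adj k' x z /\ adj z y
  end.

(* layer adj C i x : x lies at distance exactly i from the vertex set C, i.e. x \in C_i *)
Definition layer (V : Type) (adj : V -> V -> Prop) (C : V -> Prop) (i : nat) (x : V) : Prop :=
  (exists c, C c /\ reach adj i c x) /\
  (forall j c, (j < i)%N -> C c -> ~ reach adj j c x).

Definition num_exactly (V : eqType) (P : V -> Prop) (k : nat) : Prop :=
  exists s : seq V, [/\ uniq s, size s = k & forall y, y \in s <-> P y].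

Definition covering_radius (V : Type) (adj : V -> V -> Prop) (C : V -> Prop) (rho : nat) : Prop :=
  (exists x, layer adj C rho x) /\ (forall i x, (rho < i)%N -> ~ layer adj C i x).

(* C is completely regular: there are numbers gamma_i, alpha_i, beta_i such that every
   vertex of C_i has gamma_i neighbours in C_{i-1}, alpha_i in C_i, beta_i in C_{i+1}.
   (For i = 0, C_{-1} is empty, so the gamma condition is only imposed for i > 0.) *)
Definition completely_regular (V : eqType) (adj : V -> V -> Prop) (C : V -> Prop) : Prop :=
  exists gamma alpha beta : nat -> nat,
    forall i x, layer adj C i x ->
      [/\ (0 < i)%N -> num_exactly (fun y => adj x y /\ layer adj C i.-1 y) (gamma i),
          num_exactly (fun y => adj x y /\ layer adj C i y) (alpha i)
        & num_exactly (fun y => adj x y /\ layer adj C i.+1 y) (beta i)].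

Definition grass_vertex (F : finFieldType) (n k : nat) :=
  {U : {vspace 'rV[F]_n} | \dim U == k}.

Definition grass_adj (F : finFieldType) (n k : nat) (U W : grass_vertex F n k) : Prop :=
  \dim (sval U :&: sval W)%VS = k.-1.

Definition is_spread3 (F : finFieldType) (n : nat) (S : grass_vertex F n 3 -> Prop) : Prop :=
  forall v : 'rV[F]_n, v != 0 -> exists! U, S U /\ v \in sval U.

(* Let S be a 3-spread of F^n, q = |F|, n >= 6.  For a 3-space W let dist W be
   0 if W lies in S, 1 if W meets an element of S in a plane (that element
   spread_nbr W is then unique), and 2 otherwise; this is the graph distance
   from W to S (layer_iff).  The theorem rests on cnt_dist: the number cnt X j
   of neighbours of X at distance j depends only on dist X and j.
   - 3-spaces with prescribed intersections are counted by double counting the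
     ordered triples of vectors spanning them (count_planes, and its instances
     count_nbr, count_common_nbr1, count_common_nbr2).
   - A neighbour W of X near the spread is classified by spread_nbr W; the spread
     elements meeting X in a point outside a subspace M are counted through the
     points they cover (count_meeting), which gives the three layer counts.
   - For n >= 6 a 3-space at distance 2 exists, because the 4-spaces T + Pi, for
     the spread elements T meeting a suitable 2-space Pi, cannot cover F^n
     (exists_far); hence the covering radius is exactly 2.
   The file develops, in order: counting lemmas, subspace lemmas, plane counts,
   the spread and the distance to it, the three layers, the translation to the
   graph-theoretic notions of Defs, and the theorem. *)

From Pilot Require Import Defs.
From HB Require Import structures.
From mathcomp Require Import all_boot all_order all_algebra all_field.
From mathcomp Require Import zify.
From Stdlib Require Import ClassicalEpsilon.
Set Implicit Arguments. Unset Strict Implicit. Unset Printing Implicit Defensive.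
Import GRing.Theory.

Lemma card_constant_fibres (T U : finType) (f : T -> U) (D : pred T) (A : pred U) c :
  (forall t, D t -> A (f t)) ->
  (forall u, A u -> #|[pred t | D t && (f t == u)]| = c) -> #|D| = #|A| * c.
Proof.
move=> DA fibre; rewrite -sum1_card (partition_big f A) //= -sum_nat_const.
by apply: eq_bigr => u /fibre <-; rewrite -sum1_card.
Qed.

Lemma card_dep_pairs (X Y : finType) (A : pred X) (B : X -> pred Y) c :
  (forall a, A a -> #|B a| = c) ->
  #|[pred t : X * Y | A t.1 && B t.1 t.2]| = #|A| * c.
Proof.
move=> cB; apply: (card_constant_fibres (f := fst)) => [t /andP[]//|a Aa].
have pair_inj : injective (@pair X Y a) by move=> y1 y2 [].
rewrite -(cB a Aa) -(card_imset _ pair_inj); apply: eq_card => -[a' y].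
rewrite !inE; apply/idP/imsetP => [/= /andP[/andP[_ By] /eqP <-]|[y' By' [-> ->]]].
  by exists y.
rewrite /= eqxx Aa andbT; exact: By'.
Qed.

Definition prodp (X Y : finType) (A : pred X) (B : pred Y) :=
  [pred t : X * Y | (t.1 \in A) && (t.2 \in B)].

Lemma in_prodp (X Y : finType) (A : pred X) (B : pred Y) t :
  (t \in prodp A B) = (t.1 \in A) && (t.2 \in B).
Proof. by []. Qed.

Lemma card_prodp (X Y : finType) (A : pred X) (B : pred Y) : #|prodp A B| = #|A| * #|B|.
Proof. exact: (@card_dep_pairs _ _ A (fun _ => B)). Qed.

Lemma card_bigcup_le (I T : finType) (P : pred I) (A : I -> {set T}) :
  #|\bigcup_(i | P i) A i| <= \sum_(i | P i) #|A i|.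
Proof.
apply: (big_ind2 (fun (B : {set T}) m => #|B| <= m)) => // [|B1 m1 B2 m2 le1 le2].
  by rewrite cards0.
by apply: leq_trans (leq_card_setU B1 B2) _; apply: leq_add.
Qed.

Definition asbool (P : Prop) : bool := if excluded_middle_informative P then true else false.

Lemma asboolP (P : Prop) : reflect P (asbool P).
Proof. by rewrite /asbool; case: excluded_middle_informative => h; constructor. Qed.

Definition fin_vspace (F : finFieldType) (n : nat) := {vspace 'rV[F]_n}.
HB.instance Definition _ (F : finFieldType) (n : nat) :=
  Countable.copy (fin_vspace F n) (can_type (@VectorInternalTheory.vs2mxK F 'rV[F]_n)).
HB.instance Definition _ (F : finFieldType) (n : nat) :=
  Finite.copy (fin_vspace F n) (can_type (@VectorInternalTheory.vs2mxK F 'rV[F]_n)).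

Section Subspaces.
Variables (F : finFieldType) (n : nat).
Local Notation V := 'rV[F]_n.
Local Notation q := #|F|.
Implicit Types (U W P Q X Y Z : {vspace V}) (v a b c : V).

Definition vdiff U P := [pred v : V | (v \in U) && (v \notin P)].

Lemma card_vdiff U P : #|vdiff U P| = q ^ \dim U - q ^ \dim (U :&: P).
Proof.
rewrite -!card_vspace -(cardID (mem P) (mem U)).
have -> : #|[predI mem U & mem P]| = #|(U :&: P)%VS|.
  by apply: eq_card => v; rewrite !inE memv_cap.
by rewrite addKn; apply: eq_card => v; rewrite !inE andbC.
Qed.

Lemma in_vdiff_cap W U P v : (v \in vdiff (W :&: U) P) = (v \in vdiff U P) && (v \in W).
Proof. by rewrite !inE memv_cap -andbA andbC. Qed.

Definition indep U := [pred t : V * V | (t.1 \in vdiff U 0%VS) && (t.2 \in vdiff U <[t.1]>)].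

Lemma card_indep U : #|indep U| = (q ^ \dim U - 1) * (q ^ \dim U - q).
Proof.
rewrite (@card_dep_pairs _ _ (vdiff U 0%VS) (fun a => vdiff U <[a]>) (q ^ \dim U - q)).
  by rewrite card_vdiff capv0 dimv0.
move=> a; rewrite inE memv0 => /andP[aU a0].
by rewrite card_vdiff (capv_idPr _) -?memvE // dim_vline a0.
Qed.

Lemma dim_fullv : \dim (fullv : {vspace V}) = n.
Proof. by rewrite dimvf dim_matrix; exact: mul1n. Qed.

Lemma in_indep_cap W U a b :
  ((a, b) \in indep (W :&: U)) = [&& (a, b) \in indep U, a \in W & b \in W].
Proof.
rewrite !inE /= !memv_cap.
by case: (a \in W); case: (b \in W); rewrite ?andbF ?andbT.
Qed.

Lemma subv_eq_dim U W : (U <= W)%VS -> \dim W <= \dim U -> U = W.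
Proof. by move=> UW dWU; apply/eqP; rewrite eqEdim UW dWU. Qed.

Lemma capv_eq_dim W X Y : (Y <= X)%VS -> \dim (W :&: X) <= \dim (W :&: Y) ->
  (W :&: Y = W :&: X)%VS.
Proof. by move=> YX le; apply: subv_eq_dim => //; apply: capvS. Qed.

Lemma dimv_gt0 U v : v \in U -> v != 0%R -> 0 < \dim U.
Proof.
by move=> vU; apply: contraNT; rewrite lt0n dimv_eq0 negbK => /eqP U0; rewrite -memv0 -U0.
Qed.

Lemma nz_notin U v : v \notin U -> v != 0%R.
Proof. by apply: contraNneq => ->; rewrite mem0v. Qed.

Lemma exists_nz U : 0 < \dim U -> exists2 v, v \in U & v != 0%R.
Proof. by move=> U0; exists (vpick U); rewrite ?memv_pick // vpick0 -dimv_eq0 -lt0n. Qed.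

Lemma dim_add_line U v : v \notin U -> \dim (U + <[v]>) = (\dim U).+1.
Proof.
move=> vU; have cap0 : (U :&: <[v]> = 0)%VS.
  apply/eqP; rewrite -subv0; apply/subvP => w /memv_capP[wU /vlineP[k wk]].
  rewrite memv0 wk; have [->|k0] := eqVneq k 0%R; first by rewrite scale0r.
  by move: (memvZ k^-1 wU); rewrite wk scalerA mulVf // scale1r (negbTE vU).
have := dimv_sum_cap U <[v]>.
by rewrite cap0 dimv0 addn0 dim_vline (nz_notin vU) addn1.
Qed.

Lemma dim_meet_gt0 W P Q : (P <= W)%VS -> (Q <= W)%VS ->
  \dim W < \dim P + \dim Q -> 0 < \dim (P :&: Q).
Proof.
move=> PW QW; have := dimv_sum_cap P Q.
have : \dim (P + Q) <= \dim W by apply: dimvS; rewrite subv_add PW QW.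
lia.
Qed.

Lemma planes_meet W P Q : \dim W = 3 -> (P <= W)%VS -> (Q <= W)%VS ->
  \dim P = 2 -> \dim Q = 2 -> 0 < \dim (P :&: Q).
Proof. by move=> dW PW QW dP dQ; apply: dim_meet_gt0 PW QW _; rewrite dW dP dQ. Qed.

Lemma common_point W X T : \dim W = 3 -> \dim (W :&: X) = 2 -> \dim (W :&: T) = 2 ->
  0 < \dim (W :&: (X :&: T)).
Proof.
move=> dW dWX dWT; apply: leq_trans (planes_meet dW (capvSl W X) (capvSl W T) dWX dWT) _.
apply: dimvS; rewrite !subv_cap; apply/and3P; split.
- exact: subv_trans (capvSl _ _) (capvSl _ _).
- exact: subv_trans (capvSl _ _) (capvSr _ _).
- exact: subv_trans (capvSr _ _) (capvSr _ _).
Qed.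

Definition span3 a b c : {vspace V} := (<[a]> + <[b]> + <[c]>)%VS.

Lemma span3_sub a b c W : (span3 a b c <= W)%VS = [&& a \in W, b \in W & c \in W].
Proof. by rewrite /span3 !subv_add -!memvE andbA. Qed.

Lemma mem_span3 a b c : [/\ a \in span3 a b c, b \in span3 a b c & c \in span3 a b c].
Proof. by have := subvv (span3 a b c); rewrite {1}span3_sub => /and3P[]. Qed.

Lemma dim_span2 a b : a != 0%R -> b \notin <[a]>%VS -> \dim (<[a]> + <[b]>)%VS = 2.
Proof. by move=> a0 ba; rewrite dim_add_line // dim_vline a0. Qed.

Lemma dim_span3 a b c : a != 0%R -> b \notin <[a]>%VS -> c \notin (<[a]> + <[b]>)%VS ->
  \dim (span3 a b c) = 3.
Proof. by move=> a0 ba cab; rewrite /span3 dim_add_line // dim_span2. Qed.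

Lemma span3_eq a b c W : \dim (span3 a b c) = 3 -> \dim W = 3 ->
  a \in W -> b \in W -> c \in W -> span3 a b c = W.
Proof.
move=> d3 dW aW bW cW.
by apply: subv_eq_dim; rewrite ?span3_sub ?aW ?bW ?cW ?d3 ?dW.
Qed.

Lemma dim_cap_plane Y X Z c : \dim Y = 3 -> (Z <= Y :&: X)%VS -> \dim Z = 2 ->
  c \in Y -> c \notin X -> \dim (Y :&: X) = 2.
Proof.
move=> dY ZYX dZ cY cX.
have ge2 : 2 <= \dim (Y :&: X) by rewrite -dZ dimvS.
have ne3 : \dim (Y :&: X) != 3.
  apply: contraNneq cX => d3; have eY : (Y :&: X)%VS = Y.
    by apply: subv_eq_dim; rewrite ?capvSl ?d3 ?dY.
  by move: cY; rewrite -eY memv_cap => /andP[].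
have := dimvS (capvSl Y X); rewrite dY; lia.
Qed.

End Subspaces.

Section PlaneCounts.
Variables (F : finFieldType) (n : nat).
Local Notation V := 'rV[F]_n.
Local Notation q := #|F|.
Local Notation VS := (fin_vspace F n).
Implicit Types (U W P Q X T Y : {vspace V}) (v a b c : V).

(* 3-spaces are counted through their ordered bases adapted to the configuration
   at hand: a triple t of vectors spans the subspace span_of t. *)
Definition span_of (t : (V * V) * V) : VS := span3 t.1.1 t.1.2 t.2.
Definition in3 W (t : (V * V) * V) := [&& t.1.1 \in W, t.1.2 \in W & t.2 \in W].

Lemma count_planes (D : pred ((V * V) * V)) (A : pred VS) (k : nat) :
  (forall t, t \in D -> \dim (span_of t) = 3 /\ A (span_of t)) ->
  (forall W : VS, A W -> \dim W = 3 /\ #|[pred t | (t \in D) && in3 W t]| = k) ->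
  #|D| = #|A| * k.
Proof.
move=> Dspan Afibre; apply: (card_constant_fibres (f := span_of)) => [t /Dspan[]//|W AW].
have [dW <-] := Afibre W AW; apply: eq_card => t; rewrite !inE -[D t]/(t \in D).
have [Dt|_] := boolP (t \in D); last by [].
have [d3 _] := Dspan t Dt.
have [aY bY cY] := mem_span3 t.1.1 t.1.2 t.2.
rewrite /=; apply/eqP/and3P => [<-|[aW bW cW]]; first exact: And3 aY bY cY.
exact: (span3_eq d3 dW aW bW cW).
Qed.

Definition nbr X := [pred W : VS | (\dim W == 3) && (\dim (W :&: X) == 2)].

Lemma span_nbr X a b c : (a, b) \in indep X -> c \notin X ->
  \dim (span3 a b c) = 3 /\ \dim (span3 a b c :&: X) = 2.
Proof.
rewrite !inE /= memv0 => /andP[/andP[aX a0] /andP[bX ba]] cX.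
have abX : (<[a]> + <[b]> <= X)%VS by rewrite subv_add -!memvE aX bX.
have cab : c \notin (<[a]> + <[b]>)%VS by apply: contra cX; apply: (subvP abX).
have d3 := dim_span3 a0 ba cab; split=> //.
have [_ _ cY] := mem_span3 a b c.
apply: (dim_cap_plane d3 _ (dim_span2 a0 ba) cY cX).
by rewrite subv_cap abX /span3 addvSl.
Qed.

Lemma count_nbr X : \dim X = 3 ->
  #|nbr X| * ((q ^ 2 - 1) * (q ^ 2 - q) * (q ^ 3 - q ^ 2)) =
  (q ^ 3 - 1) * (q ^ 3 - q) * (q ^ n - q ^ 3).
Proof.
move=> dX; have -> : (q ^ 3 - 1) * (q ^ 3 - q) * (q ^ n - q ^ 3) =
    #|prodp (indep X) (vdiff fullv X)|.
  by rewrite card_prodp card_indep card_vdiff capfv dim_fullv dX.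
apply: esym; apply: count_planes => [[[a b] c]|W].
  rewrite !inE /= => /andP[abX /andP[_ cX]]; have [-> ->] := span_nbr abX cX.
  by rewrite !eqxx.
rewrite inE => /andP[/eqP dW /eqP dWX]; split=> //.
have -> : (q ^ 2 - 1) * (q ^ 2 - q) * (q ^ 3 - q ^ 2) =
    #|prodp (indep (W :&: X)) (vdiff (W :&: fullv) X)|.
  by rewrite card_prodp card_indep !card_vdiff capvf dW dWX.
apply: eq_card => -[[a b] c]; rewrite [LHS]inE !in_prodp /= in_indep_cap in_vdiff_cap.
rewrite /in3 /=.
by move: ((a, b) \in indep X) (c \in vdiff fullv X) (a \in W) (b \in W) (c \in W); do 5!case.
Qed.

Lemma exists_common_nbr X T : \dim X = 3 -> \dim T = 3 -> \dim (X :&: T) = 1 ->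
  exists Z : VS, [/\ \dim Z = 3, \dim (T :&: Z) = 2 & \dim (Z :&: X) = 2].
Proof.
move=> dX dT dXT.
have [v] : exists2 v, v \in (X :&: T)%VS & v != 0%R by apply: exists_nz; rewrite dXT.
rewrite memv_cap => /andP[vX vT] v0.
have [a aX aT] : exists2 a, a \in X & a \notin T.
  by apply/subvPn/negP => XT; move: dXT; rewrite (capv_idPl XT) dX.
have [w wT wX] : exists2 w, w \in T & w \notin X.
  by apply/subvPn/negP => TX; move: dXT; rewrite (capv_idPr TX) dT.
have vXT : (<[v]> <= X :&: T)%VS by rewrite -memvE memv_cap vX vT.
have av : a \notin <[v]>%VS.
  by apply: contra aT => /(subvP vXT); rewrite memv_cap => /andP[].
have wv : w \notin <[v]>%VS.
  by apply: contra wX => /(subvP vXT); rewrite memv_cap => /andP[].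
have vaX : (<[v]> + <[a]> <= X)%VS by rewrite subv_add -!memvE vX aX.
have wva : w \notin (<[v]> + <[a]>)%VS by apply: contra wX; apply: (subvP vaX).
have dZ := dim_span3 v0 av wva; have [vZ aZ wZ] := mem_span3 v a w.
exists (span3 v a w); split; first exact: dZ.
  rewrite capvC; apply: (dim_cap_plane dZ _ (dim_span2 v0 wv) aZ aT).
  by rewrite subv_cap !subv_add -!memvE vZ wZ vT wT.
apply: (dim_cap_plane dZ _ (dim_span2 v0 av) wZ wX).
by rewrite subv_cap vaX subv_add -!memvE vZ aZ.
Qed.

Definition common_nbr X T k := [pred W : VS | [&& \dim W == 3, \dim (W :&: X) == 2,
   \dim (W :&: T) == 2 & \dim (W :&: (X :&: T)) == k]].

Lemma span_common_nbr1 X T a b c :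
  a \in vdiff (X :&: T) 0 -> b \in vdiff X (X :&: T) -> c \in vdiff T (X :&: T) ->
  \dim (span3 a b c) = 3 /\ span3 a b c \in common_nbr X T 1.
Proof.
rewrite !inE memv0 !memv_cap => /andP[/andP[aX aT] a0] /andP[bX].
rewrite bX /= => bT /andP[cT]; rewrite cT andbT => cX.
have aXT : (<[a]> <= X :&: T)%VS by rewrite -memvE memv_cap aX aT.
have ba : b \notin <[a]>%VS.
  by apply: contra bT => /(subvP aXT); rewrite memv_cap => /andP[].
have ca : c \notin <[a]>%VS.
  by apply: contra cX => /(subvP aXT); rewrite memv_cap => /andP[].
have abX : (<[a]> + <[b]> <= X)%VS by rewrite subv_add -!memvE aX bX.
have cab : c \notin (<[a]> + <[b]>)%VS by apply: contra cX; apply: (subvP abX).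
have d3 := dim_span3 a0 ba cab; have [aY bY cY] := mem_span3 a b c.
set Y := span3 a b c in d3 aY bY cY *.
have dYX : \dim (Y :&: X) = 2.
  apply: (dim_cap_plane d3 _ (dim_span2 a0 ba) cY cX).
  by rewrite subv_cap abX subv_add -!memvE aY bY.
have dYT : \dim (Y :&: T) = 2.
  apply: (dim_cap_plane d3 _ (dim_span2 a0 ca) bY bT).
  by rewrite subv_cap !subv_add -!memvE aY cY aT cT.
split; first exact: d3.
rewrite d3 dYX dYT !eqxx andTb.
have ge1 : 0 < \dim (Y :&: (X :&: T)).
  by apply: (dimv_gt0 (v := a)) a0; rewrite !memv_cap aY aX aT.
have le1 : \dim (Y :&: (X :&: T)) <= 1.
  rewrite leqNgt; apply/negP => gt1.
  have e : (Y :&: (X :&: T) = Y :&: X)%VS by apply: capv_eq_dim; [exact: capvSl | rewrite dYX].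
  have : b \in (Y :&: (X :&: T))%VS by rewrite e memv_cap bY bX.
  by rewrite !memv_cap (negbTE bT) !andbF.
by rewrite eqn_leq le1.
Qed.

Lemma count_common_nbr1 X T : \dim X = 3 -> \dim T = 3 ->
  #|common_nbr X T 1| * ((q - 1) * (q ^ 2 - q) * (q ^ 2 - q)) =
  (q ^ \dim (X :&: T) - 1) * (q ^ 3 - q ^ \dim (X :&: T)) * (q ^ 3 - q ^ \dim (X :&: T)).
Proof.
move=> dX dT; set m := (X :&: T)%VS.
have -> : (q ^ \dim m - 1) * (q ^ 3 - q ^ \dim m) * (q ^ 3 - q ^ \dim m) =
    #|prodp (prodp (vdiff m 0) (vdiff X m)) (vdiff T m)|.
  rewrite !card_prodp !card_vdiff capv0 dimv0 dX dT.
  by rewrite (capv_idPr (capvSl X T)) (capv_idPr (capvSr X T)).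
apply: esym; apply: count_planes => [[[a b] c]|W].
  rewrite !in_prodp => /andP[/andP[aP bP] cP].
  by apply: span_common_nbr1; rewrite // capvC.
rewrite inE => /and4P[/eqP dW /eqP dWX /eqP dWT /eqP dWm]; split; first exact: dW.
have -> : (q - 1) * (q ^ 2 - q) * (q ^ 2 - q) =
    #|prodp (prodp (vdiff (W :&: m) 0) (vdiff (W :&: X) m)) (vdiff (W :&: T) m)|.
  rewrite !card_prodp !card_vdiff capv0 dimv0 -!capvA.
  by rewrite (capv_idPr (capvSl X T)) (capv_idPr (capvSr X T)) dWX dWT dWm.
apply: eq_card => -[[a b] c]; rewrite [LHS]inE !in_prodp /=.
rewrite (in_vdiff_cap W m) (in_vdiff_cap W X) (in_vdiff_cap W T) /in3 /=.
move: (a \in vdiff m 0) (b \in vdiff X m) (c \in vdiff T m) (a \in W) (b \in W) (c \in W).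
by do 6!case.
Qed.

Lemma span_common_nbr2 X T a b c : \dim (X :&: T) = 2 ->
  (a, b) \in indep (X :&: T) -> c \notin X -> c \notin T ->
  \dim (span3 a b c) = 3 /\ span3 a b c \in common_nbr X T 2.
Proof.
move=> dm abm cX cT; have abX : (a, b) \in indep X.
  by move: abm; rewrite -[(X :&: T)%VS]capvC in_indep_cap => /and3P[].
have [d3 dYX] := span_nbr abX cX; have [aY bY cY] := mem_span3 a b c.
move: abm; rewrite !inE /= memv0 => /andP[/andP[am a0] /andP[bm ba]].
have abY : (<[a]> + <[b]> <= span3 a b c :&: (X :&: T))%VS.
  by rewrite subv_cap !subv_add -!memvE aY bY am bm.
have dYm : \dim (span3 a b c :&: (X :&: T)) = 2.
  apply/eqP; rewrite eqn_leq -{1}dm (dimvS (capvSr _ _)) andTb.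
  by rewrite -(dim_span2 a0 ba) (dimvS abY).
have dYT : \dim (span3 a b c :&: T) = 2.
  apply: (dim_cap_plane d3 _ (dim_span2 a0 ba) cY cT).
  exact: subv_trans abY (capvS (subvv _) (capvSr X T)).
by split; [exact: d3 | rewrite d3 dYX dYT dYm !eqxx].
Qed.

Lemma count_common_nbr2 X T : \dim X = 3 -> \dim T = 3 -> \dim (X :&: T) = 2 ->
  #|common_nbr X T 2| * ((q ^ 2 - 1) * (q ^ 2 - q) * (q ^ 3 - q ^ 2)) =
  (q ^ 2 - 1) * (q ^ 2 - q) * ((q ^ n - q ^ 3) - (q ^ 3 - q ^ 2)).
Proof.
move=> dX dT dm; set m := (X :&: T)%VS.
pose C := [pred v | (v \in vdiff fullv X) && (v \in vdiff fullv T)].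
have cardC : #|C| = (q ^ n - q ^ 3) - (q ^ 3 - q ^ 2).
  have := cardID (mem T) (vdiff fullv X).
  have -> : #|[predI vdiff fullv X & mem T]| = #|vdiff T X|.
    by apply: eq_card => v; rewrite !inE memvf andbC.
  have -> : #|[predD vdiff fullv X & mem T]| = #|C|.
    by apply: eq_card => v; rewrite !inE memvf andbC.
  rewrite !card_vdiff capfv dim_fullv dX dT capvC dm => <-.
  by rewrite addKn.
have -> : (q ^ 2 - 1) * (q ^ 2 - q) * ((q ^ n - q ^ 3) - (q ^ 3 - q ^ 2)) =
    #|prodp (indep m) C| by rewrite card_prodp card_indep dm cardC.
apply: esym; apply: count_planes => [[[a b] c]|W].
  rewrite in_prodp => /andP[abm]; rewrite inE !inE memvf => /andP[cX cT].
  exact: span_common_nbr2.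
rewrite inE => /and4P[/eqP dW /eqP dWX /eqP dWT /eqP dWm]; split; first exact: dW.
have eX : (W :&: m = W :&: X)%VS by apply: capv_eq_dim; [exact: capvSl | rewrite dWX dWm].
have eT : (W :&: m = W :&: T)%VS by apply: capv_eq_dim; [exact: capvSr | rewrite dWT dWm].
have sameXT v : v \in W -> (v \in T) = (v \in X).
  move=> vW; have := congr1 (fun U : {vspace V} => v \in U) (etrans (esym eT) eX).
  by rewrite !memv_cap vW.
have -> : (q ^ 2 - 1) * (q ^ 2 - q) * (q ^ 3 - q ^ 2) =
    #|prodp (indep (W :&: m)) (vdiff (W :&: fullv) X)|.
  by rewrite card_prodp card_indep !card_vdiff capvf dWm dW dWX.
apply: eq_card => -[[a b] c]; rewrite [LHS]inE !in_prodp /=.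
rewrite (in_indep_cap W m) (in_vdiff_cap W fullv) /in3 /=.
have CX : c \in W -> (c \in C) = (c \in vdiff fullv X).
  by move=> cW; rewrite [c \in C]inE ![c \in vdiff fullv _]inE sameXT // andbb.
case: (c \in W) CX => [/(_ isT) ->|_]; last by rewrite !andbF.
by move: ((a, b) \in indep m) (c \in vdiff fullv X) (a \in W) (b \in W); do 4!case.
Qed.

End PlaneCounts.

Section Spread.
Variables (F : finFieldType) (n : nat) (S : grass_vertex F n 3 -> Prop).
Hypothesis spreadS : is_spread3 S.
Local Notation V := 'rV[F]_n.
Local Notation q := #|F|.
Local Notation VS := (fin_vspace F n).
Implicit Types (U W X T M : VS) (v : V).

Definition in_spread : pred VS := fun U => asbool (exists x, S x /\ sval x = U).

Lemma in_spreadP (x : grass_vertex F n 3) : reflect (S x) (in_spread (sval x)).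
Proof.
apply: (iffP (asboolP _)) => [[y [Sy /val_inj <-]]|Sx] //.
by exists x.
Qed.

Lemma spread_dim T : in_spread T -> \dim T = 3.
Proof. by case/asboolP=> x [_ <-]; apply/eqP; exact: (svalP x). Qed.

Lemma spread_eq_mem T1 T2 v : in_spread T1 -> in_spread T2 -> v != 0%R ->
  v \in T1 -> v \in T2 -> T1 = T2.
Proof.
case/asboolP=> [x1 [S1 <-]] /asboolP[x2 [S2 <-]] v0 v1 v2.
have [U [_ Uuniq]] := spreadS v0.
by rewrite -(Uuniq x1 (conj S1 v1)) -(Uuniq x2 (conj S2 v2)).
Qed.

Lemma spread_eq T1 T2 : in_spread T1 -> in_spread T2 -> 0 < \dim (T1 :&: T2) -> T1 = T2.
Proof.
move=> s1 s2 /exists_nz[v]; rewrite memv_cap => /andP[v1 v2] v0.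
exact: spread_eq_mem s1 s2 v0 v1 v2.
Qed.

Definition spread_elt v : VS := odflt 0%VS [pick T | in_spread T && (v \in T)].

Lemma spread_eltP v : v != 0%R -> in_spread (spread_elt v) /\ v \in spread_elt v.
Proof.
move=> v0; rewrite /spread_elt; case: pickP => [T /andP[]//|none].
have [U [[SU vU] _]] := spreadS v0.
by have := none (sval U); rewrite vU andbT => /negbT/in_spreadP.
Qed.

Lemma spread_not_adj T W : in_spread T -> in_spread W -> \dim (T :&: W) != 2.
Proof.
move=> sT sW; apply/eqP => d2; have eTW : T = W by apply: spread_eq; rewrite ?d2.
by move: d2; rewrite eTW capvv (spread_dim sW).
Qed.

Lemma adj_spread_uniq T1 T2 W : in_spread T1 -> in_spread T2 -> \dim W = 3 ->
  \dim (T1 :&: W) = 2 -> \dim (T2 :&: W) = 2 -> T1 = T2.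
Proof.
move=> s1 s2 dW d1 d2; apply: spread_eq => //.
apply: leq_trans (planes_meet dW (capvSr T1 W) (capvSr T2 W) d1 d2) _.
by apply: dimvS; apply: capvS; exact: capvSl.
Qed.

Lemma dim_cap_spread X T : \dim X = 3 -> ~~ in_spread X -> in_spread T ->
  \dim (X :&: T) <= 2.
Proof.
move=> dX nX sT; rewrite leqNgt; apply: contra nX => gt2.
have d3 : \dim (X :&: T) = 3.
  by apply/eqP; rewrite eqn_leq gt2 -{1}dX dimvS // capvSl.
suff -> : X = T by [].
have eX : (X :&: T = X)%VS by apply: subv_eq_dim; rewrite ?capvSl ?d3 ?dX.
have eT : (X :&: T = T)%VS by apply: subv_eq_dim; rewrite ?capvSr ?d3 ?spread_dim.
by rewrite -eX eT.
Qed.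

(* The spread elements meeting U outside M. When each of them meets U in a
   point, they partition the points of U outside M. *)
Definition meeting (U M : VS) := [pred T : VS | in_spread T &&
  [exists v, [&& v \in U, v \notin M & v \in (T : {vspace V})]]].

Lemma count_meeting (U M : VS) : (M <= U)%VS ->
  (forall T, T \in meeting U M -> \dim (U :&: T) = 1) ->
  #|meeting U M| * (q - 1) = q ^ \dim U - q ^ \dim M.
Proof.
move=> MU line; rewrite -{2}(capv_idPr MU) -card_vdiff.
apply: esym; apply: (card_constant_fibres (f := spread_elt)) => [v|T TM].
  rewrite inE => /andP[vU vM]; have [sv vT] := spread_eltP (nz_notin vM).
  by rewrite inE sv; apply/existsP; exists v; rewrite vU vM.
have dUT := line T TM; move: TM; rewrite inE => /andP[sT /existsP[w /and3P[wU wM wT]]].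
transitivity #|vdiff (U :&: T)%VS M|; last first.
  rewrite card_vdiff dUT expn1; congr (_ - _).
  suff -> : \dim (U :&: T :&: M) = 0 by [].
  have le1 : \dim (U :&: T :&: M) <= 1 by have := dimvS (capvSl (U :&: T) M); rewrite dUT.
  suff : \dim (U :&: T :&: M) != 1 by case: (\dim _) le1 => [|[|]].
  apply: contraNneq wM => d1.
  have e : (U :&: T :&: M = U :&: T)%VS by apply: subv_eq_dim; rewrite ?capvSl ?d1 ?dUT.
  have : w \in (U :&: T :&: M)%VS by rewrite e memv_cap wU wT.
  by rewrite memv_cap => /andP[].
apply: eq_card => v; rewrite !inE memv_cap.
apply/andP/andP => [[/andP[vU vM] /eqP <-]|[/andP[vU vT] vM]].
  by have [_ vT] := spread_eltP (nz_notin vM); rewrite vU vT.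
rewrite vU vM; split=> //; apply/eqP; have [sv vT'] := spread_eltP (nz_notin vM).
exact: spread_eq_mem sv sT (nz_notin vM) vT' vT.
Qed.

Definition near_spread W := [exists T, in_spread T && (\dim (T :&: W) == 2)].
Definition dist W : nat := if in_spread W then 0 else if near_spread W then 1 else 2.

Definition spread_nbr W : VS := odflt 0%VS [pick T | in_spread T && (\dim (T :&: W) == 2)].

Lemma spread_nbrP W : near_spread W -> in_spread (spread_nbr W) /\ \dim (spread_nbr W :&: W) = 2.
Proof.
case/existsP=> T TW; rewrite /spread_nbr; case: pickP => [T' /andP[-> /eqP]//|none].
by have := none T; rewrite TW.
Qed.

Lemma near_not_spread W : near_spread W -> ~~ in_spread W.
Proof.
case/spread_nbrP => sT dTW; apply/negP => sW.
by move: (spread_not_adj sT sW); rewrite dTW.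
Qed.

Lemma dist0 W : (dist W == 0) = in_spread W.
Proof. by rewrite /dist; case: (in_spread W) => //; case: (near_spread W). Qed.

Lemma dist1 W : (dist W == 1) = near_spread W.
Proof.
rewrite /dist; case: (boolP (in_spread W)) => [sW|_]; last by case: (near_spread W).
by apply/esym/negbTE; apply: contraL sW; apply: near_not_spread.
Qed.

Lemma dist2 W : (dist W == 2) = ~~ in_spread W && ~~ near_spread W.
Proof. by rewrite /dist; case: (in_spread W) => //; case: (near_spread W). Qed.

Lemma dist_le2 W : dist W <= 2.
Proof. by rewrite /dist; case: (in_spread W) => //; case: (near_spread W). Qed.

Definition cnt X j := #|[pred W in nbr X | dist W == j]|.

Lemma cnt_sum X : #|nbr X| = cnt X 0 + cnt X 1 + cnt X 2.
Proof.
rewrite -(cardID [pred W : VS | dist W == 0] (nbr X)).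
rewrite -(cardID [pred W : VS | dist W == 1] [predD nbr X & [pred W : VS | dist W == 0]]).
rewrite addnA; congr (_ + _ + _); apply: eq_card => W; rewrite !inE.
all: by have := dist_le2 W; case: (dist W) => [|[|[|]]]; rewrite ?andbT ?andbF.
Qed.

Lemma cnt_gt2 X j : 2 < j -> cnt X j = 0.
Proof.
move=> j_gt2; apply: eq_card0 => W; rewrite !inE; apply/negbTE/nandP; right.
by apply: contraTneq j_gt2 => <-; rewrite -leqNgt dist_le2.
Qed.

Lemma q_gt1 : 1 < q.
Proof. exact: card_finNzRing_gt1. Qed.

Lemma denominators_gt0 :
  [/\ 0 < q - 1, 0 < q ^ 2 - 1, 0 < q ^ 2 - q & 0 < q ^ 3 - q ^ 2].
Proof. by have := q_gt1; rewrite !expnS expn0 !muln1; split; nia. Qed.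

Lemma eq_divn_mul a b c : a * c = b -> 0 < c -> a = b %/ c.
Proof. by move=> <- c_gt0; rewrite mulnK. Qed.

(* The valency of J_q(n,3), the number of common neighbours of two 3-spaces
   meeting in a d-space through a point of it, the number of common
   neighbours of two adjacent 3-spaces containing their meet, and the number
   of points of a 3-space outside a d-space, divided by the points per line. *)
Definition valency :=
  (q ^ 3 - 1) * (q ^ 3 - q) * (q ^ n - q ^ 3) %/ ((q ^ 2 - 1) * (q ^ 2 - q) * (q ^ 3 - q ^ 2)).
Definition common_line d :=
  (q ^ d - 1) * (q ^ 3 - q ^ d) * (q ^ 3 - q ^ d) %/ ((q - 1) * (q ^ 2 - q) * (q ^ 2 - q)).
Definition common_plane := (q ^ 2 - 1) * (q ^ 2 - q) * ((q ^ n - q ^ 3) - (q ^ 3 - q ^ 2))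
  %/ ((q ^ 2 - 1) * (q ^ 2 - q) * (q ^ 3 - q ^ 2)).
Definition transversals d := (q ^ 3 - q ^ d) %/ (q - 1).

(* The number of neighbours near the spread of a 3-space at distance 1, resp. 2. *)
Definition near_count := common_line 2 + common_plane + transversals 2 * common_line 1.
Definition far_count := transversals 0 * common_line 1.

Lemma card_nbr X : \dim X = 3 -> #|nbr X| = valency.
Proof.
move=> dX; apply: eq_divn_mul; first exact: count_nbr.
by have [q1 q21 q2q q32] := denominators_gt0; rewrite !muln_gt0 ?q1 ?q21 ?q2q ?q32.
Qed.

Lemma card_common_line X T : \dim X = 3 -> \dim T = 3 ->
  #|common_nbr X T 1| = common_line (\dim (X :&: T)).
Proof.
move=> dX dT; apply: eq_divn_mul; first exact: count_common_nbr1.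
by have [q1 q21 q2q q32] := denominators_gt0; rewrite !muln_gt0 ?q1 ?q21 ?q2q ?q32.
Qed.

Lemma card_common_plane X T : \dim X = 3 -> \dim T = 3 -> \dim (X :&: T) = 2 ->
  #|common_nbr X T 2| = common_plane.
Proof.
move=> dX dT dXT; apply: eq_divn_mul; first exact: count_common_nbr2.
by have [q1 q21 q2q q32] := denominators_gt0; rewrite !muln_gt0 ?q1 ?q21 ?q2q ?q32.
Qed.

Lemma card_meeting X M : \dim X = 3 -> (M <= X)%VS ->
  (forall T, T \in meeting X M -> \dim (X :&: T) = 1) ->
  #|meeting X M| = transversals (\dim M).
Proof.
move=> dX MX line; apply: eq_divn_mul; last by case: denominators_gt0.
by rewrite count_meeting // dX.
Qed.

Lemma spread_nbr_meet X W : W \in nbr X -> near_spread W -> 0 < \dim (X :&: spread_nbr W).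
Proof.
rewrite inE => /andP[/eqP dW /eqP dWX] /spread_nbrP[_ dTW].
have dWT : \dim (W :&: spread_nbr W) = 2 by rewrite capvC.
by apply: leq_trans (common_point dW dWX dWT) _; apply: dimvS; exact: capvSr.
Qed.

Lemma nbr_through_spread X T W : in_spread T -> \dim (X :&: T) = 1 ->
  [&& W \in nbr X, near_spread W & spread_nbr W == T] = (W \in common_nbr X T 1).
Proof.
move=> sT dXT; rewrite !inE; apply/idP/idP.
  case/and3P => /andP[/eqP dW /eqP dWX] nW /eqP eT.
  have [_] := spread_nbrP nW; rewrite eT capvC => dWT.
  rewrite dW dWX dWT !eqxx /= eqn_leq (common_point dW dWX dWT) andbT.
  by have := dimvS (capvSr W (X :&: T)); rewrite dXT.
case/and4P => /eqP dW /eqP dWX /eqP dWT _.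
have nW : near_spread W by apply/existsP; exists T; rewrite sT capvC dWT.
rewrite dW dWX !eqxx nW /=; have [sT' dT'W] := spread_nbrP nW.
by apply/eqP; apply: (adj_spread_uniq sT' sT dW dT'W); rewrite capvC.
Qed.

Lemma count_near_nbr X M : \dim X = 3 -> (M <= X)%VS ->
  (forall T, T \in meeting X M -> \dim (X :&: T) = 1) ->
  #|[pred W in nbr X | near_spread W && (spread_nbr W \in meeting X M)]| =
  transversals (\dim M) * common_line 1.
Proof.
move=> dX MX line; rewrite -(card_meeting dX MX line).
apply: (card_constant_fibres (f := spread_nbr)) => [W /andP[_ /andP[]]//|T TM].
have dXT := line T TM; move: TM; rewrite inE => /andP[sT Tex].
rewrite -dXT -(card_common_line dX (spread_dim sT)).
apply: eq_card => W; rewrite -nbr_through_spread // !inE.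
have [->|_] := eqVneq (spread_nbr W) T; last by rewrite !andbF.
by rewrite sT Tex !andbT.
Qed.

Lemma cnt1_near X : cnt X 1 = #|[pred W in nbr X | near_spread W]|.
Proof. by apply: eq_card => W; rewrite !inE dist1. Qed.

Lemma meeting_line X M T : \dim X = 3 -> ~~ in_spread X -> T \in meeting X M ->
  \dim (X :&: T) != 2 -> \dim (X :&: T) = 1.
Proof.
move=> dX nX; rewrite inE => /andP[sT /existsP[v /and3P[vX vM vT]]] ne2.
have := dim_cap_spread dX nX sT.
have : 0 < \dim (X :&: T) by apply: (dimv_gt0 (v := v)); rewrite ?memv_cap ?vX ?vT ?(nz_notin vM).
by move: ne2; case: (\dim _) => [|[|[|]]].
Qed.

Lemma near_nbr_meeting X W : W \in nbr X -> near_spread W -> spread_nbr W \in meeting X 0%VS.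
Proof.
move=> WX nW; have [sT _] := spread_nbrP nW.
have [v] := exists_nz (spread_nbr_meet WX nW); rewrite memv_cap => /andP[vX vT] v0.
by rewrite inE sT; apply/existsP; exists v; rewrite vX memv0 v0 vT.
Qed.

Lemma cnt_layer0 X : in_spread X -> [/\ cnt X 0 = 0, cnt X 1 = valency & cnt X 2 = 0].
Proof.
move=> sX.
have c0 : cnt X 0 = 0.
  apply: eq_card0 => W; rewrite !inE dist0; apply/negP => /andP[/andP[_ /eqP dWX] sW].
  by move: (spread_not_adj sW sX); rewrite dWX.
have c2 : cnt X 2 = 0.
  apply: eq_card0 => W; rewrite !inE dist2; apply/negP => /andP[/andP[_ /eqP dWX] /andP[_ /negP]].
  by apply; apply/existsP; exists X; rewrite sX capvC dWX.
by split=> //; have := cnt_sum X; rewrite card_nbr ?spread_dim // c0 c2 addn0 add0n.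
Qed.

(* Layer 2: a 3-space far from the spread has no neighbour in the spread, and its
   neighbours near the spread are counted through the spread elements meeting it. *)
Lemma cnt_layer2 X : \dim X = 3 -> ~~ in_spread X -> ~~ near_spread X ->
  [/\ cnt X 0 = 0, cnt X 1 = far_count & cnt X 2 = valency - far_count].
Proof.
move=> dX nX fX.
have c0 : cnt X 0 = 0.
  apply: eq_card0 => W; rewrite !inE dist0; apply/negP => /andP[/andP[_ /eqP dWX] sW].
  by move/negP: fX; apply; apply/existsP; exists W; rewrite sW dWX.
have c1 : cnt X 1 = far_count.
  have line T : T \in meeting X 0%VS -> \dim (X :&: T) = 1.
    move=> TM; apply: (meeting_line dX nX TM); apply: contra fX => /eqP dXT.
    by move: TM; rewrite inE => /andP[sT _]; apply/existsP; exists T; rewrite sT capvC dXT.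
  have := count_near_nbr dX (sub0v X) line; rewrite dimv0 cnt1_near /far_count => <-.
  apply: eq_card => W; rewrite [LHS]inE [RHS]inE.
  by case: (boolP (W \in nbr X)) => // WX; case: (boolP (near_spread W)) => // nW;
    rewrite near_nbr_meeting.
split=> //; have := cnt_sum X; rewrite card_nbr // c0 c1 add0n => ->.
by rewrite addKn.
Qed.

Section NearLayer.
Variable X : VS.
Hypotheses (dX : \dim X = 3) (nX : near_spread X).
Local Notation T0 := (spread_nbr X).

Let sT0 : in_spread T0. Proof. by case: (spread_nbrP nX). Qed.
Let dT0X : \dim (T0 :&: X) = 2. Proof. by case: (spread_nbrP nX). Qed.
Let dXT0 : \dim (X :&: T0) = 2. Proof. by rewrite capvC dT0X. Qed.

Lemma cnt_layer1_0 : cnt X 0 = 1.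
Proof.
apply: (@eq_card1 _ T0) => W; rewrite !inE dist0.
apply/idP/eqP => [/andP[/andP[_ /eqP dWX] sW]|->]; first exact: adj_spread_uniq sW sT0 dX dWX dT0X.
by rewrite (spread_dim sT0) dT0X sT0.
Qed.

(* The neighbours of X attached to T0 are its common neighbours with T0. *)
Lemma card_nbr_via_T0 :
  #|[pred W in nbr X | near_spread W && (spread_nbr W == T0)]| = common_line 2 + common_plane.
Proof.
rewrite -dXT0 -(card_common_line dX (spread_dim sT0)) -(card_common_plane dX (spread_dim sT0) dXT0).
rewrite -(cardID [pred W : VS | \dim (W :&: (X :&: T0)) == 1]); congr (_ + _).
all: apply: eq_card => W; rewrite !inE; apply/idP/idP.
- case/andP=> /andP[/andP[/eqP dW /eqP dWX] /andP[nW /eqP eT]] /eqP dWm.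
  have [_] := spread_nbrP nW; rewrite eT capvC => dWT.
  by rewrite dW dWX dWT dWm !eqxx.
- case/and4P=> /eqP dW /eqP dWX /eqP dWT /eqP dWm.
  have nW : near_spread W by apply/existsP; exists T0; rewrite sT0 capvC dWT.
  have [sT dTW] := spread_nbrP nW.
  have eT : spread_nbr W = T0 by apply: (adj_spread_uniq sT sT0 dW dTW); rewrite capvC.
  by rewrite dW dWX dWm nW eT !eqxx.
- case/andP=> dWm /andP[/andP[/eqP dW /eqP dWX] /andP[nW /eqP eT]].
  have [_] := spread_nbrP nW; rewrite eT capvC => dWT.
  have ge1 := common_point dW dWX dWT.
  have le2 : \dim (W :&: (X :&: T0)) <= 2 by have := dimvS (capvSr W (X :&: T0)); rewrite dXT0.
  rewrite dW dWX dWT !eqxx /=.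
  by move: dWm ge1 le2; case: (\dim _) => [|[|[|]]].
- case/and4P=> /eqP dW /eqP dWX /eqP dWT /eqP dWm.
  have nW : near_spread W by apply/existsP; exists T0; rewrite sT0 capvC dWT.
  have [sT dTW] := spread_nbrP nW.
  have eT : spread_nbr W = T0 by apply: (adj_spread_uniq sT sT0 dW dTW); rewrite capvC.
  by rewrite dW dWX nW eT dWm !eqxx.
Qed.

(* The other neighbours of X near the spread are attached to the spread elements
   meeting X in a point outside X :&: T0. *)
Lemma card_nbr_via_other :
  #|[pred W in nbr X | near_spread W && (spread_nbr W != T0)]| = transversals 2 * common_line 1.
Proof.
have nsX := near_not_spread nX.
have line T : T \in meeting X (X :&: T0)%VS -> \dim (X :&: T) = 1.
  move=> TM; apply: (meeting_line dX nsX TM); apply/eqP => dXT.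
  move: TM; rewrite inE => /andP[sT /existsP[v /and3P[vX vM vT]]].
  have eT : T = T0 by apply: adj_spread_uniq sT sT0 dX _ dT0X; rewrite capvC.
  by move: vM; rewrite memv_cap vX -eT vT.
rewrite -dXT0 -(count_near_nbr dX (capvSl X T0) line).
apply: eq_card => W; rewrite [LHS]inE [RHS]inE.
case: (boolP (W \in nbr X)) => // WX; case: (boolP (near_spread W)) => //= nW.
have [sT dTW] := spread_nbrP nW.
apply/idP/idP => [neT|].
  have [v] := exists_nz (spread_nbr_meet WX nW); rewrite memv_cap => /andP[vX vT] v0.
  rewrite inE sT; apply/existsP; exists v; rewrite vX vT memv_cap vX /= andbT.
  by apply: contra neT => vT0; apply/eqP; apply: spread_eq_mem sT sT0 v0 vT vT0.
rewrite inE => /andP[_ /existsP[v /and3P[vX vM vT]]].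
by apply: contraNneq vM => eT; rewrite memv_cap vX -eT vT.
Qed.

Lemma cnt_layer1_1 : cnt X 1 = near_count.
Proof.
rewrite cnt1_near /near_count -card_nbr_via_T0 -card_nbr_via_other.
rewrite -(cardID [pred W : VS | spread_nbr W == T0]); congr (_ + _).
all: apply: eq_card => W; rewrite !inE.
all: by case: (spread_nbr W == T0); rewrite /= ?andbT ?andbF.
Qed.

Lemma cnt_layer1 : [/\ cnt X 0 = 1, cnt X 1 = near_count & cnt X 2 = valency - 1 - near_count].
Proof.
split; rewrite ?cnt_layer1_0 ?cnt_layer1_1 //.
by rewrite -(card_nbr dX) (cnt_sum X) cnt_layer1_0 cnt_layer1_1 -addnA addKn addKn.
Qed.

End NearLayer.

Definition intersection_number (d j : nat) : nat :=
  match d, j with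
  | 0, 1 => valency
  | 1, 0 => 1
  | 1, 1 => near_count
  | 1, 2 => valency - 1 - near_count
  | 2, 1 => far_count
  | 2, 2 => valency - far_count
  | _, _ => 0
  end.

Lemma cnt_dist X j : \dim X = 3 -> cnt X j = intersection_number (dist X) j.
Proof.
move=> dX; have [j_gt2|j_le2] := ltnP 2 j.
  by rewrite cnt_gt2 //; case: (dist X) => [|[|[|d]]]; case: j j_gt2 => [|[|[|j]]].
have [c0 c1 c2] : [/\ cnt X 0 = intersection_number (dist X) 0,
    cnt X 1 = intersection_number (dist X) 1 & cnt X 2 = intersection_number (dist X) 2].
  rewrite /dist; case: (boolP (in_spread X)) => [sX|nX]; first exact: cnt_layer0.
  case: (boolP (near_spread X)) => [nearX|farX]; first exact: cnt_layer1.
  exact: cnt_layer2.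
by case: j j_le2 => [|[|[|]]].
Qed.

Local Notation GV := (grass_vertex F n 3).
Local Notation adj := (@grass_adj F n 3).

Definition vdist (x : GV) : nat := dist (sval x).

Lemma vdist_spread (c : GV) : S c -> vdist c = 0.
Proof. by move/in_spreadP; rewrite /vdist -dist0 => /eqP. Qed.

Lemma reach_dist j (c x : GV) : S c -> reach adj j c x -> vdist x <= j.
Proof.
case: j => [|[|j]] Sc /=; first by move=> <-; rewrite vdist_spread.
  case=> [<-|[_ [<- cx]]]; first by rewrite vdist_spread.
  have : near_spread (sval x).
    by apply/existsP; exists (sval c); rewrite cx (introT (in_spreadP c) Sc).
  by rewrite /vdist -dist1 => /eqP ->.
by move=> _; apply: leq_trans (dist_le2 _) _.
Qed.

Lemma far_two_steps X : \dim X = 3 -> ~~ in_spread X -> ~~ near_spread X ->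
  exists T Z : VS, [/\ in_spread T, \dim Z = 3, \dim (T :&: Z) = 2 & \dim (Z :&: X) = 2].
Proof.
move=> dX nX fX; have [v vX v0] : exists2 v, v \in X & v != 0%R by apply: exists_nz; rewrite dX.
have [sT vT] := spread_eltP v0.
have TM : spread_elt v \in meeting X 0%VS.
  by rewrite inE sT; apply/existsP; exists v; rewrite vX memv0 v0 vT.
have dXT : \dim (X :&: spread_elt v) = 1.
  apply: (meeting_line dX nX TM); apply: contra fX => /eqP dXT.
  by apply/existsP; exists (spread_elt v); rewrite sT capvC dXT.
have [Z [dZ dTZ dZX]] := exists_common_nbr dX (spread_dim sT) dXT.
by exists (spread_elt v), Z.
Qed.

Lemma dist_reach (x : GV) : exists2 c, S c & reach adj (vdist x) c x.
Proof.
have dX : \dim (sval x) = 3 by apply/eqP; exact: (svalP x).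
have := dist_le2 (sval x); rewrite /vdist.
case De: (dist (sval x)) => [|[|[|]]] // _.
- by exists x => //; apply/in_spreadP; rewrite -dist0 De.
- move/eqP: De; rewrite dist1 => /spread_nbrP[/asboolP[c [Sc ec]] dTX].
  by exists c => //=; right; exists c; split=> //; rewrite /grass_adj ec dTX.
move/eqP: De; rewrite dist2 => /andP[nX fX].
have [T [Z [/asboolP[c [Sc ec]] dZ dTZ dZX]]] := far_two_steps dX nX fX.
pose z : GV := exist _ Z (introT eqP dZ).
exists c => //=; right; exists z; split; last by rewrite /grass_adj /= dZX.
by right; exists c; split=> //; rewrite /grass_adj ec /= dTZ.
Qed.

Lemma layer_iff i (x : GV) : layer adj S i x <-> vdist x = i.
Proof.
split => [[[c [Sc r]] shortest]|<-].
  have [lt|gt|//] := ltngtP (vdist x) i; last by move: (reach_dist Sc r); rewrite leqNgt gt.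
  by have [c' Sc' r'] := dist_reach x; case: (shortest _ _ lt Sc' r').
split; first by have [c Sc r] := dist_reach x; exists c.
by move=> j c lt Sc /(reach_dist Sc); rewrite leqNgt lt.
Qed.

Lemma num_nbr_layer (x : GV) j :
  num_exactly (fun y => adj x y /\ layer adj S j y) (cnt (sval x) j).
Proof.
pose vertex (W : VS) : option GV := insub (W : {vspace V}).
have vertexK : ocancel vertex (fun y : GV => sval y : VS).
  by move=> W; rewrite /vertex; case: insubP => //= u _ ->.
have svalK : pcancel (fun y : GV => sval y : VS) vertex by move=> y; rewrite /vertex valK.
pose P := [pred W in nbr (sval x) | dist W == j].
exists (pmap vertex (enum P)); split.
- exact: (pmap_uniq vertexK (enum_uniq P)).
- rewrite size_pmap /cnt cardE -/P -[RHS]count_predT.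
  apply: eq_in_count => W; rewrite mem_enum => /andP[/andP[dW _] _].
  by rewrite /vertex isSome_insub.
move=> y; rewrite (can2_mem_pmap vertexK svalK) mem_enum !inE (svalP y) /=.
rewrite capvC layer_iff /vdist /grass_adj /=.
split; first by case/andP => /eqP -> /eqP ->.
by case=> -> ->; rewrite !eqxx.
Qed.

Lemma num_nbr_layer_const i j (x : GV) : layer adj S i x ->
  num_exactly (fun y => adj x y /\ layer adj S j y) (intersection_number i j).
Proof.
move=> /layer_iff <-; rewrite /vdist -cnt_dist; first exact: num_nbr_layer.
by apply/eqP; exact: (svalP x).
Qed.

Lemma exists_line_off_spread : 3 < n ->
  exists Pi : VS, \dim Pi = 2 /\ forall T, in_spread T -> \dim (Pi :&: T) <= 1.
Proof.
move=> n_gt3; have [a _ a0] : exists2 a, a \in (fullv : VS) & a != 0%R.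
  by apply: exists_nz; rewrite dim_fullv; apply: leq_trans n_gt3.
have [sA aA] := spread_eltP a0.
have [b _ bA] : exists2 b, b \in (fullv : VS) & b \notin spread_elt a.
  apply/subvPn/negP => fA; have := dimvS fA.
  by rewrite dim_fullv (spread_dim sA) leqNgt n_gt3.
have ba : b \notin <[a]>%VS by apply: contra bA => /vlineP[k ->]; rewrite memvZ.
exists (<[a]> + <[b]>)%VS; split; first exact: dim_span2.
move=> T sT; rewrite leqNgt; apply/negP => dPT.
have PT : (<[a]> + <[b]> <= T)%VS.
  apply/capv_idPl; apply: subv_eq_dim; first exact: capvSl.
  by rewrite dim_span2.
have aT : a \in T by apply: (subvP PT); apply: (subvP (addvSl _ _)); exact: memv_line.
have bT : b \in T by apply: (subvP PT); apply: (subvP (addvSr _ _)); exact: memv_line.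
by move: bA; rewrite -(spread_eq_mem sT sA a0 aT aA) bT.
Qed.

(* If Pi is such a 2-space, the 4-spaces T + Pi, for the q + 1 spread elements T
   meeting Pi, do not cover F^n when n >= 6. *)
Lemma exists_vector_off (Pi : VS) : 6 <= n -> \dim Pi = 2 ->
  (forall T, in_spread T -> \dim (Pi :&: T) <= 1) ->
  exists c : V, forall T, T \in meeting Pi 0%VS -> c \notin (T + Pi)%VS.
Proof.
move=> n6 dPi offPi.
have line T : T \in meeting Pi 0%VS -> \dim (Pi :&: T) = 1.
  rewrite inE => /andP[sT /existsP[v /and3P[vP vM vT]]].
  apply/eqP; rewrite eqn_leq offPi //=.
  by apply: (dimv_gt0 (v := v)) (nz_notin vM); rewrite memv_cap vP vT.
have cardM : #|meeting Pi 0%VS| = q.+1.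
  have := count_meeting (sub0v Pi) line; rewrite dPi dimv0 expn0.
  have [q1 _ _ _] := denominators_gt0; have := q_gt1.
  by rewrite -[q ^ 2 - 1]/((q * q) - 1) => q_gt1 e; apply/eqP; rewrite -(eqn_pmul2r q1) e; nia.
pose U := \bigcup_(T in meeting Pi 0%VS) [set v in (T + Pi)%VS].
have cardU : #|U| <= q.+1 * q ^ 4.
  apply: leq_trans (card_bigcup_le _ _) _; rewrite -cardM -sum_nat_const.
  apply: leq_sum => T TM; rewrite cardsE card_vspace.
  have sT : in_spread T by move: TM; rewrite inE => /andP[].
  have := dimv_sum_cap T Pi; rewrite capvC (line T TM) (spread_dim sT) dPi addn1.
  by case=> ->.
have [c cU] : exists c, c \notin U.
  case: (pickP [pred c | c \notin U]) => [c cU|none]; first by exists c.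
  have : #|(fullv : VS)| <= #|U|.
    by apply/subset_leq_card/subsetP => v _; move: (none v); rewrite inE => /negbFE.
  rewrite card_vspace dim_fullv leqNgt => /negP[]; apply: leq_ltn_trans cardU _.
  apply: (@leq_trans (q ^ 2 * q ^ 4)); last by rewrite -expnD leq_exp2l // q_gt1.
  rewrite ltn_mul2r expn_gt0 (ltnW q_gt1) /= expnS expn1.
  apply: (@leq_trans (q + q)); first by rewrite -addn1 ltn_add2l q_gt1.
  by rewrite addnn -muln2 leq_mul2l q_gt1 orbT.
exists c => T TM; apply: contra cU => cT; apply/bigcupP; exists T => //.
by rewrite inE.
Qed.

Lemma exists_far : 6 <= n -> exists X : VS, [/\ \dim X = 3, ~~ in_spread X & ~~ near_spread X].
Proof.
move=> n6; have [Pi [dPi offPi]] := exists_line_off_spread (leq_trans (isT : 3 < 6) n6).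
have [c cnot] := exists_vector_off n6 dPi offPi.
have [v vPi v0] : exists2 v, v \in Pi & v != 0%R by apply: exists_nz; rewrite dPi.
have meetsPi (T : VS) : in_spread T -> v \in T -> T \in meeting Pi 0%VS.
  by move=> sT vT; rewrite inE sT; apply/existsP; exists v; rewrite vPi memv0 v0 vT.
have cPi : c \notin Pi.
  have [sv vT] := spread_eltP v0.
  by apply: contra (cnot _ (meetsPi _ sv vT)); apply: (subvP (addvSr _ _)).
set X := (Pi + <[c]>)%VS.
have PiX : (Pi <= X)%VS by exact: addvSl.
have cX : c \in X by apply: (subvP (addvSr _ _)); exact: memv_line.
have dX : \dim X = 3 by rewrite dim_add_line // dPi.
exists X; split=> //.
  apply/negP => sX; apply: (negP (cnot X (meetsPi _ sX (subvP PiX _ vPi)))).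
  exact: (subvP (addvSl _ _)).
apply/existsP => -[T /andP[sT /eqP dTX]].
have [w] := exists_nz (planes_meet dX (capvSr T X) PiX dTX dPi).
rewrite !memv_cap => /andP[/andP[wT _] wPi] w0.
have TM : T \in meeting Pi 0%VS.
  by rewrite inE sT; apply/existsP; exists w; rewrite wPi memv0 w0 wT.
have YX : (T :&: X + Pi <= X)%VS by rewrite subv_add capvSr PiX.
have dY : \dim X <= \dim (T :&: X + Pi).
  have := dimv_sum_cap (T :&: X) Pi; rewrite dTX dPi dX.
  have : \dim (T :&: X :&: Pi) <= 1.
    apply: leq_trans (offPi T sT); apply: dimvS; rewrite subv_cap capvSr andTb.
    exact: subv_trans (capvSl _ _) (capvSl _ _).
  move: (\dim (T :&: X :&: Pi)%VS) (\dim (T :&: X + Pi)%VS) => k m; clear; lia.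
have eY : (T :&: X + Pi)%VS = X by apply: subv_eq_dim.
apply: (negP (cnot T TM)); apply: (subvP (addvS (capvSl T X) (subvv Pi))).
by rewrite eY.
Qed.

End Spread.

Theorem corollary2p2 (F : finFieldType) (n : nat) (S : grass_vertex F n 3 -> Prop) :
  (6 <= n)%N -> (3 %| n)%N -> is_spread3 S ->
  completely_regular (@grass_adj F n 3) S /\ covering_radius (@grass_adj F n 3) S 2.
Proof.
move=> n6 _ spreadS; split.
  exists (fun i => intersection_number F n i i.-1), (fun i => intersection_number F n i i),
    (fun i => intersection_number F n i i.+1).
  by move=> i x Cx; split=> [_||]; apply: num_nbr_layer_const.
split.
  have [X [dX nX fX]] := exists_far spreadS n6.
  exists (exist _ X (introT eqP dX)); apply/layer_iff => //.
  by apply/eqP; rewrite /vdist dist2 nX.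
move=> i x lt_2i /layer_iff-/(_ spreadS) dx.
by move: (dist_le2 S (sval x)); rewrite -/(vdist S x) dx leqNgt lt_2i.
Qed.
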